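(* Suppose the p-values are conditionally super-uniform: for every $t$ with $\theta_t=0$, $\mathbb{P}(p_t\le U\mid\mathcal{F}_{t-1})\le U$ a.s. for every $\mathcal F_{t-1}$-measurable $[0,1]$-valued $U$. (a) If the $\mathcal{F}_{t-1}$-measurable testing levels satisfy, a.s. for every $t\ge1$, $\widehat{\mathrm{FDP}}^{\mathrm{pL\text{-}RAI}}(t):=\sum_{j=1}^t\frac{\alpha_j}{R_{j-1}+1}\le\alpha$, then $\mathrm{FDR}(t)\le\alpha$ for all $t$. (b) Let $(\lambda_t)_{t\ge1}$ be $(0,1)$-valued with each $\lambda_t$ $\mathcal{F}_{t-1}$-measurable, and let $\widehat{\mathrm{FDP}}^{\mathrm{pS\text{-}RAI}}(t):=\sum_{j=1}^t\frac{\alpha_j}{R_{j-1}+1}\cdot\frac{\mathbb{1}\{p_j>\lambda_j\}}{1-\lambda_j}$. Then (i) $\mathbb{E}[\widehat{\mathrm{FDP}}^{\mathrm{pS\text{-}RAI}}(t)]\ge\mathbb{E}[\mathrm{FDP}^*_{\mathrm{e}}(t)]$ for all $t$, where $\mathrm{FDP}^*_{\mathrm{e}}(t)=\sum_{j\in\mathcal{H}_0(t)}\alpha_j/(R_{j-1}+1)$; and (ii) if the testing levels satisfy $\widehat{\mathrm{FDP}}^{\mathrm{pS\text{-}RAI}}(t)\le\alpha$ a.s. for every $t$, then $\mathrm{FDR}(t)\le\alpha$ for all $t$.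
   Context: Let $\alpha\in(0,1)$ be a target level. Hypotheses are indexed by $t=1,2,\dots$; $\theta_t\in\{0,1\}$ is a fixed (non-random) indicator with $\theta_t=0$ iff the $t$-th null hypothesis is true. $p_1,p_2,\dots$ are $[0,1]$-valued random variables (p-values). Testing levels $\alpha_1,\alpha_2,\dots$ are $[0,1]$-valued random variables and the decisions are $\delta_t=\mathbb{1}\{p_t\le\alpha_t\}$. Let $\mathcal{F}_t=\sigma(\delta_1,\dots,\delta_t)$, $\mathcal{F}_0$ trivial; each $\alpha_t$ is required to be $\mathcal{F}_{t-1}$-measurable. $R_t=\sum_{j=1}^t\delta_j$, $R_0=0$. $\mathcal{H}_0(t)=\{j\le t:\theta_j=0\}$. $\mathrm{FDR}(t)=\mathbb{E}\big[\sum_{j\in\mathcal{H}_0(t)}\delta_j/(R_t\vee 1)\big]$. *)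

From HB Require Import structures.
From mathcomp Require Import all_boot all_order all_algebra.
From mathcomp Require Import all_classical all_reals all_analysis.
Set Implicit Arguments. Unset Strict Implicit. Unset Printing Implicit Defensive.
Import Order.TTheory GRing.Theory Num.Theory.
Local Open Scope classical_set_scope.
Local Open Scope ring_scope.

(* Hypotheses are indexed by t = 1,2,...; index 0
   of every sequence is unused.  theta t = false  <->  the t-th null is true. *)

Section OnlineFDR.
Context {d : measure_display} {T : measurableType d} {R : realType}.
Variables (p alpha : nat -> T -> R).

Definition delta (j : nat) (w : T) : bool := p j w <= alpha j w.

Definition Rcount (t : nat) (w : T) : nat :=
  (\sum_(1 <= j < t.+1) delta j w)%N.

Definition hist (t : nat) (w : T) : seq bool :=
  [seq delta j w | j <- iota 1 t].

(* F_t = sigma(delta_1, ..., delta_t): the preimages under the finite-valued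
   map (delta_1,...,delta_t) of arbitrary sets of {0,1}^t (discrete sigma-algebra). *)
Definition F_event (t : nat) (A : set T) : Prop :=
  exists B : set (seq bool), A = hist t @^-1` B.

Definition F_meas (t : nat) (U : T -> R) : Prop :=
  forall B : set R, measurable B -> F_event t (U @^-1` B).

Definition Vcount (theta : nat -> bool) (t : nat) (w : T) : nat :=
  (\sum_(1 <= j < t.+1 | ~~ theta j) delta j w)%N.

Definition FDP (theta : nat -> bool) (t : nat) (w : T) : R :=
  (Vcount theta t w)%:R / (maxn (Rcount t w) 1)%:R.

Definition FDR (P : probability T R) (theta : nat -> bool) (t : nat) : \bar R :=
  (\int[P]_w (FDP theta t w)%:E)%E.

Definition FDPhat_L (t : nat) (w : T) : R :=
  \sum_(1 <= j < t.+1) alpha j w / (Rcount j.-1 w).+1%:R.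

Definition FDPhat_S (lambda : nat -> T -> R) (t : nat) (w : T) : R :=
  \sum_(1 <= j < t.+1)
     (alpha j w / (Rcount j.-1 w).+1%:R *
      ((if lambda j w < p j w then 1 else 0) / (1 - lambda j w))).

Definition FDPstar_e (theta : nat -> bool) (t : nat) (w : T) : R :=
  \sum_(1 <= j < t.+1 | ~~ theta j) alpha j w / (Rcount j.-1 w).+1%:R.

(* Conditional super-uniformity: for every null t >= 1 and every
   F_{t-1}-measurable [0,1]-valued U,  P(p_t <= U | F_{t-1}) <= U  a.s.,
   expressed through the defining property of conditional expectation:
   for every A in F_{t-1},  P(A /\ {p_t <= U}) <= E[U 1_A]. *)
Definition cond_super_uniform (P : probability T R) (theta : nat -> bool) : Prop :=
  forall t : nat, (0 < t)%N -> ~~ theta t ->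
  forall U : T -> R, F_meas t.-1 U -> (forall w, 0 <= U w <= 1) ->
  forall A : set T, F_event t.-1 A ->
    (P (A `&` [set w | (p t w <= U w)%R]) <= \int[P]_(w in A) (U w)%:E)%E.

End OnlineFDR.

From Pilot Require Import Defs.
From HB Require Import structures.
From mathcomp Require Import all_boot all_order all_algebra.
From mathcomp Require Import all_classical all_reals all_analysis.
From mathcomp Require Import measurable_realfun zify.
Import Order.TTheory GRing.Theory Num.Theory.
Local Open Scope classical_set_scope.
Local Open Scope ring_scope.

(** The sigma-algebra F_t = sigma(delta_1, ..., delta_t) is generated by the
    finite partition of the sample space into the fibres of the history map
    w |-> (delta_1 w, ..., delta_t w).  These fibres are measurable (by induction
    on t, since alpha_(t+1) is constant on the fibres of level t), and an
    F_t-measurable weight is constant on each of them, so conditional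
    super-uniformity survives multiplication by nonnegative F_(j-1)-measurable
    weights.  With the weight 1/(R_(j-1)+1) this gives, for every null j,
    E[delta_j/(R_(j-1)+1)] <= E[alpha_j/(R_(j-1)+1)]; applied to U = lambda_j
    it also gives
    E[alpha_j/(R_(j-1)+1)] <= E[alpha_j/(R_(j-1)+1) 1{p_j > lambda_j}/(1-lambda_j)].
    Since delta_j = 1 forces R_t >= R_j = R_(j-1)+1, we have
    FDP(t) <= sum_(null j <= t) delta_j/(R_(j-1)+1), hence FDR(t) <= E[FDP*_e(t)],
    and the latter is at most E[FDP-hat(t)] <= alpha for both procedures. *)

Section ProbabilityFacts.
Context {d : measure_display} {T : measurableType d} {R : realType}.
Variable P : probability T R.

(* Sums start at index 1: nothing is assumed about index 0. *)
Lemma integral_sum_nat (F : nat -> T -> R) (Q : pred nat) t :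
  (forall j, (0 < j)%N -> measurable_fun setT (F j)) ->
  (forall j w, (0 < j)%N -> 0 <= F j w) ->
  (\int[P]_w (\sum_(1 <= j < t.+1 | Q j) F j w)%:E =
   \sum_(1 <= j < t.+1 | Q j) \int[P]_w (F j w)%:E)%E.
Proof.
move=> mF F0; rewrite big_add1 big_mkcond /=.
under eq_integral => w _ do rewrite big_add1 /= -sumEFin big_mkcond /=.
rewrite ge0_integral_sum //.
- by apply: eq_bigr => j _; case: (Q j.+1); rewrite ?integral0.
- by move=> j; case: (Q j.+1) => //; apply/measurable_EFinP; exact: mF.
- by move=> j w _; case: (Q j.+1); rewrite // lee_fin F0.
Qed.

Lemma measurable_natr_bool (b : T -> bool) :
  measurable_fun setT b -> measurable_fun setT (fun w => (b w)%:R : R).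
Proof.
have mnatr : measurable_fun setT (fun x : bool => x%:R : R) by [].
by move=> mb; exact: measurableT_comp mnatr mb.
Qed.

Lemma integral_natr_bool (b : T -> bool) (A : set T) :
  measurable_fun setT b -> measurable A ->
  (\int[P]_(w in A) ((b w)%:R)%:E = P (A `&` [set w | b w]))%E.
Proof.
move=> mb mA; have mB : measurable [set w | b w].
  by have := mb measurableT [set true] I; rewrite setTI.
rewrite setIC -integral_indic //; apply: eq_integral => w _; rewrite indicE.
by case: (boolP (b w)) => bw; [rewrite mem_set | rewrite memNset //; apply/negP].
Qed.

Lemma measurable_sum_nat (F : nat -> T -> R) (Q : pred nat) t :
  (forall j, (0 < j)%N -> measurable_fun setT (F j)) ->
  measurable_fun setT (fun w => \sum_(1 <= j < t.+1 | Q j) F j w).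
Proof.
move=> mF; under eq_fun do rewrite big_add1 /= big_mkcond /=.
by apply: measurable_sum => j; case: (Q j.+1) => //; exact: mF.
Qed.

Lemma integral_le_ae_bound {a : R} {f : T -> R} : 0 <= a ->
  measurable_fun setT f -> (forall w, 0 <= f w) -> {ae P, forall w, f w <= a} ->
  (\int[P]_w (f w)%:E <= a%:E)%E.
Proof.
move=> a0 mf f0 fa; rewrite -[leRHS]mule1 -(probability_setT P) -integral_cst //.
apply: ae_ge0_le_integral => //.
- by move=> w _; rewrite lee_fin.
- exact/measurable_EFinP.
by apply: filterS fa => w fwa _; rewrite lee_fin.
Qed.

Lemma integral_fin_num_le1 {U : T -> R} {A : set T} :
  measurable A -> measurable_fun setT U -> (forall w, 0 <= U w <= 1) ->
  (\int[P]_(w in A) (U w)%:E)%E \is a fin_num.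
Proof.
move=> mA mU U01; have U0 w : 0 <= U w by case/andP: (U01 w).
rewrite ge0_fin_numE ?integral_ge0 //; last by move=> w _; rewrite lee_fin.
apply: le_lt_trans (ltry 1); apply: le_trans (probability_le1 P mA).
rewrite -[X in (_ <= X)%E]mul1e -integral_cst //; apply: ge0_le_integral => //.
- by move=> w _; rewrite lee_fin.
- exact/measurable_EFinP/measurable_funTS.
by move=> w _; rewrite lee_fin; case/andP: (U01 w).
Qed.

End ProbabilityFacts.

Section OnlineFDRControl.
Context (d : measure_display) (T : measurableType d) (R : realType).
Variables (P : probability T R) (p alpha : nat -> T -> R).
Hypothesis mp : forall t, measurable_fun setT (p t).
Hypothesis Falpha : forall t, (0 < t)%N -> F_meas p alpha t.-1 (alpha t).

Local Notation hist := (hist p alpha).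
Local Notation delta := (delta p alpha).
Local Notation Rcount := (Rcount p alpha).

Lemma size_hist t w : size (hist t w) = t.
Proof. by rewrite size_map size_iota. Qed.

Lemma histS t w : hist t.+1 w = rcons (hist t w) (delta t.+1 w).
Proof.
by rewrite /Defs.hist -[in LHS](addn1 t) iotaD add1n map_cat cats1.
Qed.

Lemma hist_eqP t w w' :
  reflect (forall j, (0 < j <= t)%N -> delta j w = delta j w') (hist t w == hist t w').
Proof.
apply: (iffP eqP) => [/eq_in_map eqd j jt | eqd]; last first.
  by apply/eq_in_map => j; rewrite mem_iota => jt; apply: eqd; lia.
by apply: eqd; rewrite mem_iota; lia.
Qed.

Definition hist_const t (U : T -> R) :=
  forall w w', hist t w = hist t w' -> U w = U w'.

Lemma F_meas_hist_const {t U} : F_meas p alpha t U -> hist_const t U.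
Proof.
move=> FU w w' eqh; have [B UB] := FU [set U w] (measurable_set1 _).
have : (hist t @^-1` B) w' by rewrite /preimage /= -eqh -[B _]/((hist t @^-1` B) w) -UB.
by rewrite -UB.
Qed.

Lemma Rcount_hist {t w w'} : hist t w = hist t w' -> Rcount t w = Rcount t w'.
Proof. by move/eqP/hist_eqP => eqd; apply: eq_big_nat => j jt; rewrite eqd. Qed.

Definition fibre t (h : seq bool) : set T := hist t @^-1` [set h].

Lemma measurable_fibre t h : measurable (fibre t h).
Proof.
elim: t h => [|t IH] h.
  have fib0 w : fibre 0 h w <-> [::] = h by [].
  have [<-|h0] := eqVneq [::] h.
    rewrite [fibre _ _](_ : _ = setT) //.
    by apply/seteqP; split => w // _; apply/fib0.
  rewrite [fibre _ _](_ : _ = set0) //.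
  by apply/seteqP; split => w // /fib0 /eqP; rewrite (negbTE h0).
case/lastP: h => [|h b].
  rewrite [fibre _ _](_ : _ = set0) //.
  by apply/seteqP; split => w //=; rewrite histS; case: rcons.
have [[w0 hw0]|nh] := pselect (exists w0, hist t w0 = h); last first.
  rewrite [fibre _ _](_ : _ = set0) //; apply/seteqP; split => w //=.
  by rewrite /fibre /preimage /= histS => /rcons_inj [eqh _]; apply: nh; exists w.
have mle : measurable_fun setT (fun w => p t.+1 w <= alpha t.+1 w0).
  exact: measurable_fun_ler.
rewrite [fibre _ _](_ : _ = fibre t h `&` (fun w => p t.+1 w <= alpha t.+1 w0) @^-1` [set b]).
  by apply: measurableI => //; rewrite -[X in measurable X]setTI; exact: mle.
have alpha_fib w : hist t w = h -> alpha t.+1 w = alpha t.+1 w0.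
  by move=> hw; apply: (F_meas_hist_const (Falpha t.+1 (ltn0Sn t))); rewrite hw hw0.
apply/seteqP; split => w; rewrite /fibre /preimage /= histS.
  by move=> /rcons_inj [hw <-]; rewrite /Defs.delta alpha_fib.
by move=> [hw <-]; rewrite hw /Defs.delta alpha_fib.
Qed.

Lemma hist_fibres t (S : set T) :
  S = \big[setU/set0]_(h <- index_enum (t.-tuple bool)) (fibre t h `&` S).
Proof.
rewrite -bigcup_seq; apply/seteqP; split => [w Sw | w [h _ [_ Sw]]] //.
have szw : size (hist t w) == t by rewrite size_hist.
by exists (Tuple szw); [rewrite /= mem_index_enum | split].
Qed.

Lemma hist_closed_measurable t (S : set T) :
  (forall w w', hist t w = hist t w' -> S w -> S w') -> measurable S.
Proof.
move=> Sclosed; rewrite (hist_fibres t S); apply: bigsetU_measurable => h _.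
have [[w0 [hw0 Sw0]]|nS] := pselect (exists w0, fibre t h w0 /\ S w0).
  rewrite [_ `&` _](_ : _ = fibre t h); first exact: measurable_fibre.
  apply/seteqP; split => [w [] //|w hw]; split => //.
  by apply: Sclosed Sw0; rewrite hw0 hw.
rewrite [_ `&` _](_ : _ = set0) //; apply/seteqP; split => // w [hw Sw].
by apply: nS; exists w.
Qed.

Lemma F_event_measurable {t A} : F_event p alpha t A -> measurable A.
Proof.
by move=> [B ->]; apply: (hist_closed_measurable t) => w w' eqh; rewrite /preimage /= eqh.
Qed.

Lemma hist_const_measurable {t U} : hist_const t U -> measurable_fun setT U.
Proof.
move=> hU _ B _; rewrite setTI; apply: (hist_closed_measurable t) => w w' /hU.
by rewrite /preimage /= => ->.
Qed.

Lemma integral_fibres t (f : T -> \bar R) :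
  measurable_fun setT f -> (forall w, 0 <= f w)%E ->
  (\int[P]_w f w = \sum_(h <- index_enum (t.-tuple bool)) \int[P]_(w in fibre t h) f w)%E.
Proof.
move=> mf f0.
have fibresT : [set: T] = \big[setU/set0]_(h <- index_enum (t.-tuple bool)) fibre t h.
  by rewrite {1}(hist_fibres t setT); under eq_bigr do rewrite setIT.
rewrite fibresT ge0_integral_bigsetU -?fibresT //.
- exact: measurable_fibre.
- exact: index_enum_uniq.
by move=> h h' _ _ [w [hw h'w]]; apply: val_inj; rewrite /= -hw -h'w.
Qed.

Lemma integral_hist_const_mulr_le {t} {U f g : T -> R} :
  hist_const t U -> (forall w, 0 <= U w) ->
  measurable_fun setT f -> measurable_fun setT g ->
  (forall w, 0 <= f w) -> (forall w, 0 <= g w) ->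
  (forall A, F_event p alpha t A ->
     \int[P]_(w in A) (f w)%:E <= \int[P]_(w in A) (g w)%:E)%E ->
  (\int[P]_w (U w * f w)%:E <= \int[P]_w (U w * g w)%:E)%E.
Proof.
move=> hU U0 mf mg f0 g0 fg; have mU := hist_const_measurable hU.
rewrite !(integral_fibres t); first last.
- by move=> w; rewrite lee_fin mulr_ge0.
- exact/measurable_EFinP/measurable_funM.
- by move=> w; rewrite lee_fin mulr_ge0.
- exact/measurable_EFinP/measurable_funM.
apply: lee_sum => h _; have mF := measurable_fibre t h.
have [[w0 hw0]|nh] := pselect (exists w0, fibre t h w0); last first.
  rewrite [fibre t h](_ : _ = set0) ?integral_set0 //.
  by apply/seteqP; split => // w hw; apply: nh; exists w.
have Uw0 w : fibre t h w -> U w = U w0 by move=> hw; apply: hU; rewrite hw hw0.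
under eq_integral => w /set_mem/Uw0 -> do rewrite EFinM.
under [leRHS]eq_integral => w /set_mem/Uw0 -> do rewrite EFinM.
rewrite !ge0_integralZl_EFin //; first last.
- exact/measurable_EFinP/measurable_funTS.
- by move=> w _; rewrite lee_fin.
- exact/measurable_EFinP/measurable_funTS.
- by move=> w _; rewrite lee_fin.
apply: lee_wpmul2l; first by rewrite lee_fin.
by apply: fg; exists [set (h : seq bool)].
Qed.

Lemma measurable_alpha j : (0 < j)%N -> measurable_fun setT (alpha j).
Proof. by move=> j0; exact: hist_const_measurable (F_meas_hist_const (Falpha j j0)). Qed.

Lemma measurable_delta j : (0 < j)%N -> measurable_fun setT (delta j).
Proof. by move=> j0; apply: measurable_fun_ler => //; exact: measurable_alpha. Qed.

Lemma Rcount_pred_lt {t j w} :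
  (0 < j < t.+1)%N -> delta j w -> (Rcount j.-1 w < Rcount t w)%N.
Proof.
case: j => // j /andP[_ jt] dj.
have RS : Rcount j.+1 w = (Rcount j w).+1.
  by rewrite /Defs.Rcount big_nat_recr //= dj addn1.
have : (Rcount j.+1 w <= Rcount t w)%N.
  by rewrite /Defs.Rcount [X in (_ <= X)%N](big_cat_nat _ (n := j.+2)) //= leq_addr.
by rewrite RS.
Qed.

Definition Rprev_inv j w : R := ((Rcount j.-1 w).+1%:R)^-1.

Lemma Rprev_inv_ge0 j w : 0 <= Rprev_inv j w.
Proof. by rewrite invr_ge0. Qed.

Lemma Rprev_inv_hist_const j : hist_const j.-1 (Rprev_inv j).
Proof. by move=> w w' /Rcount_hist; rewrite /Rprev_inv => ->. Qed.

Lemma measurable_Rprev_inv j : measurable_fun setT (Rprev_inv j).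
Proof. exact: hist_const_measurable (Rprev_inv_hist_const j). Qed.

Section SuperUniform.
Variable theta : nat -> bool.
Hypothesis hal : forall t w, 0 <= alpha t w <= 1.
Hypothesis csu : cond_super_uniform p alpha P theta.

Lemma integral_one_sub_le_prob_gt j (U : T -> R) (A : set T) :
  (0 < j)%N -> ~~ theta j -> F_meas p alpha j.-1 U -> (forall w, 0 <= U w <= 1) ->
  F_event p alpha j.-1 A ->
  (\int[P]_(w in A) (1 - U w)%:E <= P (A `&` [set w | (U w < p j w)%R]))%E.
Proof.
move=> j0 nj FU U01 FA; have mA := F_event_measurable FA.
have mU := hist_const_measurable (F_meas_hist_const FU).
have U0 w : 0 <= U w by case/andP: (U01 w).
have U1 w : 0 <= 1 - U w by rewrite subr_ge0; case/andP: (U01 w).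
set B := [set w | p j w <= U w].
have mB : measurable B.
  have mle : measurable_fun setT (fun w => p j w <= U w) by exact: measurable_fun_ler.
  by have := mle measurableT [set true] I; rewrite setTI.
have gtE : [set w | U w < p j w] = ~` B.
  by apply/seteqP; split => w /=; rewrite ltNge => /negP.
(* P A splits along B, and super-uniformity bounds P (A `&` B) by the finite
   integral of U over A. *)
rewrite -(leeD2rE _ _ (integral_fin_num_le1 P mA mU U01)) -ge0_integralD //; first last.
- exact/measurable_EFinP/measurable_funTS.
- by move=> w _; rewrite lee_fin.
- by apply/measurable_EFinP/measurable_funTS; exact: measurable_funB.
- by move=> w _; rewrite lee_fin.
under eq_integral do rewrite -EFinD subrK.
rewrite integral_cst // mul1e (measureDI P mA mB) setDE -gtE.
by apply: leeD2l; exact: csu.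
Qed.

Lemma alpha_Rprev_inv_ge0 j w : 0 <= alpha j w * Rprev_inv j w.
Proof. by rewrite mulr_ge0 ?Rprev_inv_ge0 //; case/andP: (hal j w). Qed.

Lemma measurable_alpha_Rprev_inv j :
  (0 < j)%N -> measurable_fun setT (fun w => alpha j w * Rprev_inv j w).
Proof.
move=> j0; apply: measurable_funM; first exact: measurable_alpha.
exact: measurable_Rprev_inv.
Qed.

Lemma integral_delta_le_alpha j : (0 < j)%N -> ~~ theta j ->
  (\int[P]_w ((delta j w)%:R * Rprev_inv j w)%:E <=
   \int[P]_w (alpha j w * Rprev_inv j w)%:E)%E.
Proof.
move=> j0 nj; under eq_integral => w _ do rewrite mulrC.
under [X in (_ <= X)%E]eq_integral => w _ do rewrite mulrC.
apply: (integral_hist_const_mulr_le (Rprev_inv_hist_const j)).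
- exact: Rprev_inv_ge0.
- exact/measurable_natr_bool/measurable_delta.
- exact: measurable_alpha.
- by move=> w; rewrite ler0n.
- by move=> w; case/andP: (hal j w).
move=> A FA; rewrite integral_natr_bool.
- exact: csu j j0 nj (alpha j) (Falpha j j0) (hal j) A FA.
- exact: measurable_delta.
- exact: F_event_measurable FA.
Qed.

Lemma FDP_le_sum t w :
  FDP p alpha theta t w <= \sum_(1 <= j < t.+1 | ~~ theta j) (delta j w)%:R * Rprev_inv j w.
Proof.
rewrite /Defs.FDP /Vcount natr_sum mulr_suml big_nat_cond [leRHS]big_nat_cond.
apply: ler_sum => j /andP[jt _]; case: (boolP (delta j w)) => dj; last by rewrite !mul0r.
have := Rcount_pred_lt jt dj; rewrite !mul1r lef_pV2 ?posrE ?ltr0n ?ler_nat //; lia.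
Qed.

Lemma FDR_le_integral_FDPstar t :
  (FDR p alpha P theta t <= \int[P]_w (FDPstar_e p alpha theta t w)%:E)%E.
Proof.
have mdR j : (0 < j)%N -> measurable_fun setT (fun w => (delta j w)%:R * Rprev_inv j w).
  move=> j0; apply: measurable_funM; first exact/measurable_natr_bool/measurable_delta.
  exact: measurable_Rprev_inv.
apply: le_trans (_ : _ <= \int[P]_w (\sum_(1 <= j < t.+1 | ~~ theta j)
   (delta j w)%:R * Rprev_inv j w)%:E)%E _.
  apply: ge0_le_integral => //.
  - by move=> w _; rewrite lee_fin divr_ge0.
  - apply/measurable_EFinP/(hist_const_measurable (t := t)) => w w' eqh.
    rewrite /Defs.FDP (Rcount_hist eqh) /Vcount big_nat_cond [in RHS]big_nat_cond.
    by congr (_%:R / _); apply: eq_bigr => j /andP[jt _]; move/eqP/hist_eqP: eqh => ->.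
  - exact/measurable_EFinP/measurable_sum_nat.
  - by move=> w _; rewrite lee_fin FDP_le_sum.
rewrite !integral_sum_nat //; first last.
- by move=> j w _; rewrite divr_ge0.
- by move=> j w _; exact: alpha_Rprev_inv_ge0.
- exact: measurable_alpha_Rprev_inv.
rewrite big_nat_cond [leRHS]big_nat_cond; apply: lee_sum => j /andP[/andP[j0 _] nj].
exact: integral_delta_le_alpha.
Qed.

Lemma FDR_le_of_integral_FDPstar_le (a : R) (f : nat -> T -> R) : 0 <= a ->
  (forall t, measurable_fun setT (f t)) -> (forall t w, 0 <= f t w) ->
  (forall t, (0 < t)%N -> {ae P, forall w, f t w <= a}) ->
  (forall t, \int[P]_w (FDPstar_e p alpha theta t w)%:E <= \int[P]_w (f t w)%:E)%E ->
  forall t, (FDR p alpha P theta t <= a%:E)%E.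
Proof.
move=> a0 mf f0 fa starf t; apply: le_trans (FDR_le_integral_FDPstar t) _.
case: t => [|t].
  rewrite (eq_integral (cst 0%E)) => [|w _]; last by rewrite /FDPstar_e big_geq.
  by rewrite integral0 lee_fin.
apply: le_trans (starf _) _.
exact (integral_le_ae_bound P a0 (mf t.+1) (f0 t.+1) (fa t.+1 (ltn0Sn t))).
Qed.

Lemma FDR_le_of_FDPhatL_ae_le (a : R) : 0 <= a ->
  (forall t, (0 < t)%N -> {ae P, forall w, FDPhat_L p alpha t w <= a}) ->
  forall t, (FDR p alpha P theta t <= a%:E)%E.
Proof.
move=> a0 hL; apply: (FDR_le_of_integral_FDPstar_le _ (FDPhat_L p alpha) a0) => // [t|t w|t].
- exact: measurable_sum_nat measurable_alpha_Rprev_inv.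
- by apply: sumr_ge0 => j _; exact: alpha_Rprev_inv_ge0.
apply: ge0_le_integral => //.
- by move=> w _; rewrite lee_fin; apply: sumr_ge0 => j _; exact: alpha_Rprev_inv_ge0.
- exact/measurable_EFinP/measurable_sum_nat/measurable_alpha_Rprev_inv.
- exact/measurable_EFinP/measurable_sum_nat/measurable_alpha_Rprev_inv.
move=> w _; rewrite lee_fin /FDPstar_e [leRHS](bigID (fun j => ~~ theta j)) /= lerDl.
by apply: sumr_ge0 => j _; exact: alpha_Rprev_inv_ge0.
Qed.

Section Lambda.
Variable lambda : nat -> T -> R.
Hypothesis hl : forall t w, 0 < lambda t w < 1.
Hypothesis Flambda : forall t, (0 < t)%N -> F_meas p alpha t.-1 (lambda t).

Lemma measurable_lambda j : (0 < j)%N -> measurable_fun setT (lambda j).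
Proof. by move=> j0; exact: hist_const_measurable (F_meas_hist_const (Flambda j j0)). Qed.

Definition FDPhatS_term j w : R :=
  alpha j w / (Rcount j.-1 w).+1%:R *
  ((if lambda j w < p j w then 1 else 0) / (1 - lambda j w)).

Definition FDPhatS_weight j w : R := alpha j w * Rprev_inv j w / (1 - lambda j w).

Lemma one_sub_lambda_gt0 j w : 0 < 1 - lambda j w.
Proof. by rewrite subr_gt0; case/andP: (hl j w). Qed.

Lemma FDPhatS_weight_ge0 j w : 0 <= FDPhatS_weight j w.
Proof. by rewrite divr_ge0 ?alpha_Rprev_inv_ge0 ?ltW ?one_sub_lambda_gt0. Qed.

Lemma FDPhatS_weight_hist_const j : (0 < j)%N -> hist_const j.-1 (FDPhatS_weight j).
Proof.
move=> j0 w w' eqh; rewrite /FDPhatS_weight (Rprev_inv_hist_const _ _ _ eqh).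
by rewrite (F_meas_hist_const (Falpha j j0) _ _ eqh) (F_meas_hist_const (Flambda j j0) _ _ eqh).
Qed.

Lemma FDPhatS_termE j w :
  FDPhatS_term j w = FDPhatS_weight j w * (lambda j w < p j w)%R%:R.
Proof.
rewrite /FDPhatS_term /FDPhatS_weight -!mulrA; congr (_ * (_ * _)).
by rewrite mulrC; case: ifP.
Qed.

Lemma measurable_FDPhatS_term j : (0 < j)%N -> measurable_fun setT (FDPhatS_term j).
Proof.
move=> j0; rewrite (funext (FDPhatS_termE j)).
apply: measurable_funM; first exact: hist_const_measurable (FDPhatS_weight_hist_const _ j0).
exact/measurable_natr_bool/measurable_fun_ltr/mp/measurable_lambda.
Qed.

Lemma FDPhatS_term_ge0 j w : 0 <= FDPhatS_term j w.
Proof. by rewrite FDPhatS_termE mulr_ge0 ?FDPhatS_weight_ge0. Qed.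

Lemma integral_alpha_le_FDPhatS_term j : (0 < j)%N -> ~~ theta j ->
  (\int[P]_w (alpha j w * Rprev_inv j w)%:E <= \int[P]_w (FDPhatS_term j w)%:E)%E.
Proof.
move=> j0 nj; have lambda01 w : 0 <= lambda j w <= 1.
  by case/andP: (hl j w) => /ltW -> /ltW.
(* Both integrands are [FDPhatS_weight j] times [1 - lambda_j], resp. the
   indicator of [lambda_j < p_j]. *)
under eq_integral => w _ do
  rewrite -[alpha j w * _](divfK (lt0r_neq0 (one_sub_lambda_gt0 j w))).
under [X in (_ <= X)%E]eq_integral => w _ do rewrite FDPhatS_termE.
apply: (integral_hist_const_mulr_le (FDPhatS_weight_hist_const _ j0)).
- exact: FDPhatS_weight_ge0.
- exact/measurable_funB/measurable_lambda.
- exact/measurable_natr_bool/measurable_fun_ltr/mp/measurable_lambda.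
- by move=> w; rewrite ltW ?one_sub_lambda_gt0.
- by move=> w; rewrite ler0n.
move=> A FA; rewrite integral_natr_bool.
- exact: integral_one_sub_le_prob_gt j0 nj (Flambda j j0) lambda01 FA.
- exact/measurable_fun_ltr/mp/measurable_lambda.
- exact: F_event_measurable FA.
Qed.

Lemma integral_FDPstar_le_FDPhatS t :
  (\int[P]_w (FDPstar_e p alpha theta t w)%:E <=
   \int[P]_w (FDPhat_S p alpha lambda t w)%:E)%E.
Proof.
rewrite /FDPstar_e integral_sum_nat; first last.
- by move=> j w _; exact: alpha_Rprev_inv_ge0.
- exact: measurable_alpha_Rprev_inv.
rewrite /FDPhat_S integral_sum_nat; first last.
- by move=> j w _; exact: FDPhatS_term_ge0.
- exact: measurable_FDPhatS_term.
rewrite [leRHS](bigID (fun j => ~~ theta j)) /=; apply: le_trans (leeDl _ _).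
  rewrite big_nat_cond [leRHS]big_nat_cond; apply: lee_sum => j /andP[/andP[j0 _] nj].
  exact: integral_alpha_le_FDPhatS_term.
by apply: sume_ge0 => j _; apply: integral_ge0 => w _; rewrite lee_fin FDPhatS_term_ge0.
Qed.

Lemma FDR_le_of_FDPhatS_ae_le (a : R) : 0 <= a ->
  (forall t, (0 < t)%N -> {ae P, forall w, FDPhat_S p alpha lambda t w <= a}) ->
  forall t, (FDR p alpha P theta t <= a%:E)%E.
Proof.
move=> a0 hS.
apply: (FDR_le_of_integral_FDPstar_le _ (FDPhat_S p alpha lambda) a0) => // [t|t w|t].
- exact: measurable_sum_nat measurable_FDPhatS_term.
- by apply: sumr_ge0 => j _; exact: FDPhatS_term_ge0.
exact: integral_FDPstar_le_FDPhatS.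
Qed.
End Lambda.
End SuperUniform.
End OnlineFDRControl.

Theorem proposition4 (d : measure_display) (T : measurableType d) (R : realType)
  (P : probability T R) (a : R) (theta : nat -> bool)
  (p alpha : nat -> T -> R) :
  0 < a < 1 ->
  (forall t, measurable_fun setT (p t)) ->
  (forall t w, 0 <= p t w <= 1) ->
  (forall t w, 0 <= alpha t w <= 1) ->
  (forall t, (0 < t)%N -> F_meas p alpha t.-1 (alpha t)) ->
  cond_super_uniform p alpha P theta ->
  (* (a) *)
  ((forall t, (0 < t)%N -> {ae P, forall w, FDPhat_L p alpha t w <= a}) ->
     forall t, (FDR p alpha P theta t <= a%:E)%E)
  /\
  (* (b) *)
  (forall lambda : nat -> T -> R,
     (forall t w, 0 < lambda t w < 1) ->
     (forall t, (0 < t)%N -> F_meas p alpha t.-1 (lambda t)) ->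
     (* (i) *)
     (forall t, (\int[P]_w (FDPstar_e p alpha theta t w)%:E
                   <= \int[P]_w (FDPhat_S p alpha lambda t w)%:E)%E)
     /\
     (* (ii) *)
     ((forall t, (0 < t)%N -> {ae P, forall w, FDPhat_S p alpha lambda t w <= a}) ->
        forall t, (FDR p alpha P theta t <= a%:E)%E)).
Proof.
move=> /andP[/ltW a0 _] mp _ hal Falpha csu; split.
  exact: FDR_le_of_FDPhatL_ae_le.
move=> lambda hl Flambda; split.
  exact: integral_FDPstar_le_FDPhatS.
exact: FDR_le_of_FDPhatS_ae_le.
Qed.
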